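(* Let $\mathfrak{H}=(H,\wedge,\vee,\to,\bot,\top,\Box)$ be a $\mathsf{K4}^{\mathrm{i}}$-algebra. Then $\mathfrak{H}$ is a $\mathsf{GL}^{\mathrm{i}}$-algebra if and only if every $\mathfrak{H}$-polynomial $t(p)$ in one variable $p$ in which $p$ is $\Box$-guarded has a fixed point, i.e. there is $\mathsf{h}\in H$ with $t(\mathsf{h})=\mathsf{h}$.
   Context: A $\mathsf{K4}^{\mathrm{i}}$-algebra is a Heyting algebra $(H,\wedge,\vee,\to,\bot,\top)$ with a unary operation $\Box$ that preserves $\top$ and finite meets (i.e. $\Box\top=\top$ and $\Box(a\wedge b)=\Box a\wedge\Box b$) and satisfies $\Box a\le\Box\Box a$ for all $a$. A $\mathsf{GL}^{\mathrm{i}}$-algebra is a $\mathsf{K4}^{\mathrm{i}}$-algebra additionally satisfying $\Box(\Box a\to a)=\Box a$ for all $a$. An $\mathfrak{H}$-polynomial is a term in the signature $\wedge,\vee,\to,\bot,\top,\Box$ enriched with a constant for each element of $H$; a variable $p$ is $\Box$-guarded in a polynomial if every occurrence of $p$ lies within the scope of some $\Box$. *)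

(* A Heyting algebra, presented as a bounded lattice (equational axioms)
   with a relative pseudo-complement [imp]; the order is a <= b := a /\ b = a. *)
Record HeytingAlgebra := {
  carrier :> Type;
  meet : carrier -> carrier -> carrier;
  join : carrier -> carrier -> carrier;
  imp  : carrier -> carrier -> carrier;
  bot  : carrier;
  top  : carrier;
  meetA : forall a b c, meet a (meet b c) = meet (meet a b) c;
  meetC : forall a b, meet a b = meet b a;
  joinA : forall a b c, join a (join b c) = join (join a b) c;
  joinC : forall a b, join a b = join b a;
  meet_absorb : forall a b, meet a (join a b) = a;
  join_absorb : forall a b, join a (meet a b) = a;
  bot_least : forall a, meet bot a = bot;
  top_greatest : forall a, meet a top = a;
  residuation : forall a b c,
    meet (meet c a) b = meet c a <-> meet c (imp a b) = c
}.

Definition hle (H : HeytingAlgebra) (a b : H) : Prop := meet H a b = a.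

Record K4iAlgebra := {
  halg :> HeytingAlgebra;
  box : halg -> halg;
  box_top : box (top halg) = top halg;
  box_meet : forall a b, box (meet halg a b) = meet halg (box a) (box b);
  box_4 : forall a, hle halg (box a) (box (box a))
}.

Definition is_GLi (A : K4iAlgebra) : Prop :=
  forall a : A, box A (imp A (box A a) a) = box A a.

Inductive hpoly (H : Type) : Type :=
| PVar : hpoly H
| PConst : H -> hpoly H
| PBot : hpoly H
| PTop : hpoly H
| PMeet : hpoly H -> hpoly H -> hpoly H
| PJoin : hpoly H -> hpoly H -> hpoly H
| PImp : hpoly H -> hpoly H -> hpoly H
| PBox : hpoly H -> hpoly H.

Arguments PVar {H}.
Arguments PBot {H}.
Arguments PTop {H}.
Arguments PConst {H} _.
Arguments PMeet {H} _ _.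
Arguments PJoin {H} _ _.
Arguments PImp {H} _ _.
Arguments PBox {H} _.

Fixpoint peval (A : K4iAlgebra) (t : hpoly A) (h : A) : A :=
  match t with
  | PVar => h
  | PConst c => c
  | PBot => bot A
  | PTop => top A
  | PMeet t1 t2 => meet A (peval A t1 h) (peval A t2 h)
  | PJoin t1 t2 => join A (peval A t1 h) (peval A t2 h)
  | PImp t1 t2 => imp A (peval A t1 h) (peval A t2 h)
  | PBox t1 => box A (peval A t1 h)
  end.

Fixpoint guarded {H : Type} (t : hpoly H) : Prop :=
  match t with
  | PVar => False
  | PConst _ | PBot | PTop => True
  | PMeet t1 t2 | PJoin t1 t2 | PImp t1 t2 => guarded t1 /\ guarded t2
  | PBox _ => True
  end.

(* Existence, by induction on the number of outermost boxes of a guarded t(p): write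
   t(p) = u_{□s(p)}(p), where u_q is t with its first outermost box replaced by the
   constant q, so that every u_q has a fixed point a_q.  Put c := □s(a_⊤) and a := a_c.
   Guarded polynomials are contractive, □(x ↔ y) ≤ t(x) ↔ t(y); with Löb's rule
   (x ≤ □x and x ∧ □z ≤ z imply x ≤ z) this gives c ≤ a ↔ a_⊤, then □s(a) = c, so a is a
   fixed point of t.  Conversely, a fixed point h = □h → a of □p → a satisfies □h ≤ □a,
   hence □(□a → a) ≤ □h ≤ □a. *)


Notation "a ⊑ b" := (hle _ a b) (at level 70, no associativity).
Infix "⊓" := (meet _) (at level 40, left associativity).
Infix "⊔" := (join _) (at level 50, left associativity).
Infix "⇨" := (imp _) (at level 55, right associativity).
Notation "□ a" := (box _ a) (at level 35, right associativity).

Section Heyting.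
Variable H : HeytingAlgebra.
Implicit Types a b c e x y : H.

Lemma hle_refl a : a ⊑ a.
Proof. pose proof (meet_absorb H a (a ⊓ a)) as e. rewrite join_absorb in e. exact e. Qed.

Lemma hle_trans a b c : a ⊑ b -> b ⊑ c -> a ⊑ c.
Proof. unfold hle; intros hab hbc. rewrite <- hab, <- meetA, hbc. reflexivity. Qed.

Lemma hle_antisym a b : a ⊑ b -> b ⊑ a -> a = b.
Proof. unfold hle; intros hab hba. rewrite <- hab, meetC. exact hba. Qed.

Lemma meet_le_l a b : a ⊓ b ⊑ a.
Proof. unfold hle. rewrite <- meetA, (meetC H b a), meetA, (hle_refl a). reflexivity. Qed.

Lemma meet_le_r a b : a ⊓ b ⊑ b.
Proof. unfold hle. rewrite <- meetA, (hle_refl b). reflexivity. Qed.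

Lemma le_meet c a b : c ⊑ a -> c ⊑ b -> c ⊑ a ⊓ b.
Proof. unfold hle; intros hca hcb. rewrite meetA, hca, hcb. reflexivity. Qed.

Lemma meet_le_meet a a' b b' : a ⊑ a' -> b ⊑ b' -> a ⊓ b ⊑ a' ⊓ b'.
Proof.
  intros ha hb. apply le_meet.
  - exact (hle_trans _ _ _ (meet_le_l a b) ha).
  - exact (hle_trans _ _ _ (meet_le_r a b) hb).
Qed.

Lemma le_top a : a ⊑ top H.
Proof. apply top_greatest. Qed.

Lemma le_join_l a b : a ⊑ a ⊔ b.
Proof. apply meet_absorb. Qed.

Lemma le_join_r a b : b ⊑ a ⊔ b.
Proof. unfold hle. rewrite joinC. apply meet_absorb. Qed.

Lemma join_r a c : a ⊑ c -> a ⊔ c = c.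
Proof. unfold hle; intro hac. rewrite <- hac, joinC, meetC. apply join_absorb. Qed.

Lemma join_le a b c : a ⊑ c -> b ⊑ c -> a ⊔ b ⊑ c.
Proof.
  intros hac hbc.
  assert (habc : a ⊔ b ⊔ c = c) by now rewrite <- joinA, (join_r _ _ hbc), join_r.
  unfold hle. rewrite <- habc. apply meet_absorb.
Qed.

Lemma imp_intro c a b : c ⊓ a ⊑ b -> c ⊑ a ⇨ b.
Proof. apply residuation. Qed.

Lemma imp_elim c a b : c ⊑ a ⇨ b -> c ⊓ a ⊑ b.
Proof. apply residuation. Qed.

Lemma imp_meet_le a b : (a ⇨ b) ⊓ a ⊑ b.
Proof. apply imp_elim, hle_refl. Qed.

Definition biimp x y : H := (x ⇨ y) ⊓ (y ⇨ x).

Definition le_under e x y : Prop := e ⊓ x ⊑ y.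

Definition eq_under e x y : Prop := le_under e x y /\ le_under e y x.

Lemma le_biimp e x y : eq_under e x y <-> e ⊑ biimp x y.
Proof.
  split.
  - intros [hxy hyx]. apply le_meet; apply imp_intro; assumption.
  - intro he. split; apply imp_elim; eapply hle_trans; try exact he.
    + apply meet_le_l.
    + apply meet_le_r.
Qed.

Lemma le_under_meet e x x' y y' :
  le_under e x x' -> le_under e y y' -> le_under e (x ⊓ y) (x' ⊓ y').
Proof.
  intros hx hy. apply le_meet.
  - apply (hle_trans _ _ _ (meet_le_meet _ _ _ _ (hle_refl e) (meet_le_l x y)) hx).
  - apply (hle_trans _ _ _ (meet_le_meet _ _ _ _ (hle_refl e) (meet_le_r x y)) hy).
Qed.

Lemma le_under_join e x x' y y' :
  le_under e x x' -> le_under e y y' -> le_under e (x ⊔ y) (x' ⊔ y').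
Proof.
  unfold le_under; intros hx hy. rewrite meetC. apply imp_elim, join_le; apply imp_intro;
    rewrite meetC; eapply hle_trans; eauto using le_join_l, le_join_r.
Qed.

Lemma le_under_imp e x x' y y' :
  le_under e x' x -> le_under e y y' -> le_under e (x ⇨ y) (x' ⇨ y').
Proof.
  intros hx hy. apply imp_intro. eapply hle_trans; [|exact hy]. apply le_meet.
  - eapply hle_trans; apply meet_le_l.
  - eapply hle_trans; [|apply (imp_meet_le x y)]. apply le_meet.
    + eapply hle_trans; [apply meet_le_l | apply meet_le_r].
    + eapply hle_trans; [|exact hx].
      apply meet_le_meet; [apply meet_le_l | apply hle_refl].
Qed.

Lemma eq_under_refl e x : eq_under e x x.
Proof. split; apply meet_le_r. Qed.

Lemma eq_under_meet e x x' y y' :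
  eq_under e x x' -> eq_under e y y' -> eq_under e (x ⊓ y) (x' ⊓ y').
Proof. intros [] []; split; apply le_under_meet; assumption. Qed.

Lemma eq_under_join e x x' y y' :
  eq_under e x x' -> eq_under e y y' -> eq_under e (x ⊔ y) (x' ⊔ y').
Proof. intros [] []; split; apply le_under_join; assumption. Qed.

Lemma eq_under_imp e x x' y y' :
  eq_under e x x' -> eq_under e y y' -> eq_under e (x ⇨ y) (x' ⇨ y').
Proof. intros [] []; split; apply le_under_imp; assumption. Qed.

End Heyting.

Arguments biimp {H} x y.
Arguments le_under {H} e x y.
Arguments eq_under {H} e x y.

Fixpoint outer_boxes {T : Type} (t : hpoly T) : nat :=
  match t with
  | PMeet t1 t2 | PJoin t1 t2 | PImp t1 t2 => outer_boxes t1 + outer_boxes t2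
  | PBox _ => 1
  | _ => 0
  end.

Fixpoint first_box_body {T : Type} (t : hpoly T) : hpoly T :=
  match t with
  | PMeet t1 t2 | PJoin t1 t2 | PImp t1 t2 =>
      match outer_boxes t1 with 0 => first_box_body t2 | S _ => first_box_body t1 end
  | PBox s => s
  | _ => PVar
  end.

Fixpoint subst_first_box {T : Type} (q : T) (t : hpoly T) : hpoly T :=
  match t with
  | PMeet t1 t2 => match outer_boxes t1 with
                   | 0 => PMeet t1 (subst_first_box q t2)
                   | S _ => PMeet (subst_first_box q t1) t2 end
  | PJoin t1 t2 => match outer_boxes t1 with
                   | 0 => PJoin t1 (subst_first_box q t2)
                   | S _ => PJoin (subst_first_box q t1) t2 end
  | PImp t1 t2 => match outer_boxes t1 with
                  | 0 => PImp t1 (subst_first_box q t2)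
                  | S _ => PImp (subst_first_box q t1) t2 end
  | PBox _ => PConst q
  | _ => t
  end.

Lemma outer_boxes_subst_first_box {T : Type} (q : T) (t : hpoly T) n :
  outer_boxes t = S n -> outer_boxes (subst_first_box q t) = n.
Proof.
  revert n; induction t as [| | | |t1 IH1 t2 IH2|t1 IH1 t2 IH2|t1 IH1 t2 IH2|s _];
    simpl; intros n hn; try discriminate;
    try (destruct (outer_boxes t1) as [|m] eqn:h1; simpl;
         [rewrite h1; apply IH2; exact hn
         |rewrite (IH1 m eq_refl); simpl in hn; congruence]).
  injection hn as <-. reflexivity.
Qed.

Lemma guarded_subst_first_box {T : Type} (q : T) (t : hpoly T) :
  guarded t -> guarded (subst_first_box q t).
Proof.
  induction t; simpl; try tauto;
    intros [g1 g2]; destruct (outer_boxes t1); simpl; tauto.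
Qed.

Section K4i.
Variable A : K4iAlgebra.
Implicit Types a b c e f x y z q : A.

Lemma box_mono x y : x ⊑ y -> □ x ⊑ □ y.
Proof. unfold hle; intro hxy. rewrite <- box_meet, hxy. reflexivity. Qed.

Lemma le_under_box e f x y : e ⊑ □ f -> le_under f x y -> le_under e (□ x) (□ y).
Proof.
  intros hef hxy. eapply hle_trans.
  - apply (meet_le_meet _ _ _ _ _ hef (hle_refl _ (□ x))).
  - rewrite <- box_meet. apply box_mono, hxy.
Qed.

Lemma eq_under_box e f x y : e ⊑ □ f -> eq_under f x y -> eq_under e (□ x) (□ y).
Proof. intros hef []; split; eapply le_under_box; eassumption. Qed.

Lemma peval_eq_under (t : hpoly A) e a b :
  e ⊑ □ e -> eq_under e a b -> eq_under e (peval A t a) (peval A t b).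
Proof.
  intros he hab.
  induction t; simpl; auto using eq_under_refl, eq_under_meet, eq_under_join, eq_under_imp.
  eapply eq_under_box; eassumption.
Qed.

(* Under a guard, [□(a ↔ b)] yields [f := (a ↔ b) ∧ □(a ↔ b)], and [f ≤ □f] by axiom 4,
   so [peval_eq_under] applies to the guarded subterm. *)
Lemma peval_guarded_eq_under (t : hpoly A) e a b :
  guarded t -> e ⊑ □ biimp a b -> eq_under e (peval A t a) (peval A t b).
Proof.
  intros g hab.
  induction t as [| | | |t1 IH1 t2 IH2|t1 IH1 t2 IH2|t1 IH1 t2 IH2|s _]; simpl in *;
    try contradiction; try apply eq_under_refl;
    try (destruct g; auto using eq_under_meet, eq_under_join, eq_under_imp).
  set (f := biimp a b ⊓ □ biimp a b).
  assert (hf : f ⊑ □ f).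
  { unfold f. rewrite box_meet. apply le_meet.
    - apply meet_le_r.
    - eapply hle_trans; [apply meet_le_r | apply box_4]. }
  apply (eq_under_box _ f).
  - unfold f. rewrite box_meet. apply le_meet; [exact hab |].
    eapply hle_trans; [exact hab | apply box_4].
  - apply peval_eq_under; [exact hf |]. apply le_biimp, meet_le_l.
Qed.

Lemma peval_boxfree (t : hpoly A) a b :
  guarded t -> outer_boxes t = 0 -> peval A t a = peval A t b.
Proof.
  induction t as [| | | |t1 IH1 t2 IH2|t1 IH1 t2 IH2|t1 IH1 t2 IH2|s _];
    simpl; intros g hn; try reflexivity; try contradiction; try discriminate;
    destruct g; destruct (outer_boxes t1); try discriminate; rewrite IH1, IH2; auto.
Qed.

Lemma peval_subst_first_box (t : hpoly A) h :
  outer_boxes t <> 0 ->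
  peval A (subst_first_box (□ peval A (first_box_body t) h) t) h = peval A t h.
Proof.
  induction t as [| | | |t1 IH1 t2 IH2|t1 IH1 t2 IH2|t1 IH1 t2 IH2|s _];
    simpl; intro hn; try (exfalso; apply hn; reflexivity); try reflexivity;
    (destruct (outer_boxes t1); simpl; [rewrite IH2 | rewrite IH1]; auto; discriminate).
Qed.

Lemma peval_subst_first_box_eq_under (t : hpoly A) e a b q q' :
  guarded t -> e ⊑ □ biimp a b -> eq_under e q q' ->
  eq_under e (peval A (subst_first_box q t) a) (peval A (subst_first_box q' t) b).
Proof.
  intros g hab hq.
  induction t as [| | | |t1 IH1 t2 IH2|t1 IH1 t2 IH2|t1 IH1 t2 IH2|s _]; simpl in *;
    try contradiction; try apply eq_under_refl; try exact hq;
    destruct g; destruct (outer_boxes t1); simpl;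
    auto using eq_under_meet, eq_under_join, eq_under_imp, peval_guarded_eq_under.
Qed.

Section GLi.
Hypothesis GL : is_GLi A.

Lemma lob_rule x z : x ⊑ □ x -> x ⊓ □ z ⊑ z -> x ⊑ z.
Proof.
  intros hx hxz.
  assert (hbz : x ⊑ □ z).
  { eapply hle_trans; [exact hx |]. rewrite <- (GL z). apply box_mono, imp_intro, hxz. }
  eapply hle_trans; [| exact hxz]. apply le_meet; [apply hle_refl | exact hbz].
Qed.

Lemma fixed_point_of_box_substitution (F : A -> A -> A) (S : A -> A) :
  (forall e a b, e ⊑ □ e -> eq_under e a b -> eq_under e (S a) (S b)) ->
  (forall e a b q q', e ⊑ □ biimp a b -> eq_under e q q' -> eq_under e (F q a) (F q' b)) ->
  (forall q, exists a, F q a = a) ->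
  exists a, F (□ S a) a = a.
Proof.
  intros congS congF fixF.
  destruct (fixF (top A)) as [a0 ha0].
  set (c := □ S a0).
  destruct (fixF c) as [a1 ha1].
  exists a1.
  assert (hc : c ⊑ □ c) by apply box_4.
  assert (h10 : eq_under c a1 a0).
  { apply le_biimp, lob_rule; [exact hc |].
    apply (le_biimp _ (c ⊓ □ biimp a1 a0)).
    assert (hcq : eq_under (c ⊓ □ biimp a1 a0) c (top A)).
    { split; unfold le_under; [apply le_top | rewrite top_greatest; apply meet_le_l]. }
    pose proof (congF _ a1 a0 _ _ (meet_le_r _ _ _) hcq) as hF.
    rewrite ha1, ha0 in hF. exact hF. }
  assert (hS : eq_under c (S a1) (S a0)) by (apply congS; assumption).
  replace (□ S a1) with c; [exact ha1 |].
  apply hle_antisym.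
  - destruct (eq_under_box _ _ _ _ hc hS) as [_ hle_c].
    eapply hle_trans; [| exact hle_c]. apply le_meet; apply hle_refl.
  - apply lob_rule; [apply box_4 |]. rewrite meetC.
    exact (proj1 (eq_under_box _ _ _ _ (hle_refl _ (□ c)) hS)).
Qed.

Lemma guarded_fixed_point n :
  forall t : hpoly A, guarded t -> outer_boxes t = n -> exists a, peval A t a = a.
Proof.
  induction n as [|n IH]; intros t g hn.
  - exists (peval A t (top A)). apply peval_boxfree; assumption.
  - destruct (fixed_point_of_box_substitution (fun q => peval A (subst_first_box q t))
                (peval A (first_box_body t))) as [a ha].
    + intros. apply peval_eq_under; assumption.
    + intros. apply peval_subst_first_box_eq_under; assumption.
    + intro q. apply IH.
      * apply guarded_subst_first_box, g.
      * apply outer_boxes_subst_first_box, hn.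
    + exists a. rewrite <- peval_subst_first_box; [exact ha |]. rewrite hn. discriminate.
Qed.

End GLi.

Lemma GLi_of_fixed_point a h : h = □ h ⇨ a -> □ (□ a ⇨ a) = □ a.
Proof.
  intro hh.
  assert (hbox : □ h ⊑ □ a).
  { replace (□ h) with (□ (h ⊓ □ h)) by (rewrite box_meet; exact (box_4 A h)).
    apply box_mono. pose proof (imp_meet_le _ (□ h) a) as mp. rewrite <- hh in mp. exact mp. }
  apply hle_antisym.
  - eapply hle_trans; [| exact hbox]. apply box_mono.
    rewrite hh. apply imp_intro. eapply hle_trans; [| apply (imp_meet_le _ (□ a) a)].
    apply meet_le_meet; [apply hle_refl | exact hbox].
  - apply box_mono, imp_intro, meet_le_l.
Qed.

End K4i.

Theorem theorem3p5 (A : K4iAlgebra) :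
  is_GLi A <->
  (forall t : hpoly A, guarded t -> exists h : A, peval A t h = h).
Proof.
  split.
  - intros GL t g. exact (guarded_fixed_point A GL _ t g eq_refl).
  - intros FP a.
    destruct (FP (PImp (PBox PVar) (PConst a)) (conj I I)) as [h hh].
    exact (GLi_of_fixed_point A a h (eq_sym hh)).
Qed.
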